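(* Let $\psi$ be a bounded complexity measure, let $k\in\omega\setminus\{0,1\}$, and let $A$ be a nontrivial closed class of decision tables from $\mathcal{M}_k^\infty$. Then the function $\mathcal{H}^\infty_{\psi,A}$ is everywhere defined (i.e. defined for every $n\in\omega$) if and only if the function $L_{\psi,A}$ is everywhere defined.
   Context: Notation: $\omega=\{0,1,2,\dots\}$; $\mathcal P(\omega)$ is the set of nonempty finite subsets of $\omega$; for $k\in\omega\setminus\{0,1\}$, $E_k=\{0,1,\dots,k-1\}$. $P=\{f_i:i\in\omega\}$ is a set of attributes, $f_i\neq f_j$ for $i\ne j$. Decision tables: $\mathcal M_k^\infty$ is the set of rectangular tables filled with numbers from $E_k$, whose columns are labeled with pairwise different attributes from $P$, whose rows are pairwise different, and each row of which is labeled with a set from $\mathcal P(\omega)$ (its set of decisions). The empty table (no rows) is denoted $\Lambda$ and belongs to $\mathcal M_k^\infty$. For $T\in\mathcal M_k^\infty$: $\Delta(T)$ is the set of rows; $\Pi(T)$ is the intersection of the decision sets of all rows (common decisions); $\mathcal M_k^{\infty c}$ is the set of tables having at least one common decision, and $\Lambda\in\mathcal M_k^{\infty c}$; $\mathrm{At}(T)$ is the set of attributes labeling columns; $W(T)=|\mathrm{At}(T)|$; $N(T)$ is the number of rows. For nonempty $T$, $\Omega_k(T)$ is the set of finite words (including the empty word $\lambda$) over the alphabet $\{(f_i,\delta):f_i\in\mathrm{At}(T),\delta\in E_k\}$; for $\alpha=(f_{i_1},\delta_1)\cdots(f_{i_m},\delta_m)$, $T\alpha$ is the subtable of $T$ consisting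 of the rows having value $\delta_j$ in the column $f_{i_j}$ for all $j$, and $T\lambda=T$. Operations: for $D\subseteq\mathrm{At}(T)$, $I(D,T)$ is obtained from $T$ by deleting the columns labeled with attributes from $D$ and, in each group of rows coinciding on the remaining columns, keeping only the first row (with its decision set); $I(\mathrm{At}(T),T)=\Lambda$. For $\nu:E_k^{|\mathrm{At}(T)|}\to\mathcal P(\omega)$, $J(\nu,T)$ is obtained by replacing the decision set of each row $\bar\delta$ by $\nu(\bar\delta)$. $[T]=\{J(\nu,I(D,T)):D\subseteq\mathrm{At}(T),\ \nu:E_k^{|\mathrm{At}(T)\setminus D|}\to\mathcal P(\omega)\}$; for nonempty $A\subseteq\mathcal M_k^\infty$, $[A]=\bigcup_{T\in A}[T]$. $A$ is a closed class if $[A]=A$; it is nontrivial if it contains a nonempty table. Decision trees: a $k$-decision tree is a finite directed rooted tree with at least two nodes in which the root and the edges leaving the root are unlabeled, each terminal node is labeled with a decision from $\omega$, and each other node is labeled with an attribute from $P$, each edge leaving such a node being labeled with a number from $E_k$. $\mathrm{At}(\Gamma)$ is the set of attributes labeling nodes of $\Gamma$. For a complete path $\tau=v_1,d_1,\dots,v_m,d_m,v_{m+1}$ (from the root $v_1$ to a terminal node $v_{m+1}$), $\pi(\tau)=\lambda$ if $m=1$, and otherwise $\pi(\tau)=(f_{i_2},\delta_2)\cdots(f_{i_m},\delta_m)$ where $v_j$ is labeled $f_{i_j}$ and $d_j$ is labeled $\delta_j$; $T(\tau)=T\pi(\tau)$. For $T\ne\Lambda$, a nondeterministic decision tree for $T$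 is a $k$-decision tree $\Gamma$ with $\mathrm{At}(\Gamma)\subseteq\mathrm{At}(T)$ such that every row of $T$ belongs to $T(\tau)$ for some complete path $\tau$, and for every complete path $\tau$ either $T(\tau)=\Lambda$ or the decision at the terminal node of $\tau$ belongs to $\Pi(T(\tau))$. A deterministic decision tree for $T$ is a nondeterministic decision tree for $T$ in which, additionally, exactly one edge leaves the root and the edges leaving any node that is neither the root nor terminal are labeled with pairwise different numbers. Complexity measures: a partially bounded complexity measure is a function $\psi:P^*\to\omega$ on finite words over the alphabet $P$ such that for all words $\alpha_1,\alpha_2$: $\psi(\alpha_1)=0$ iff $\alpha_1=\lambda$; $\psi(\alpha_1)$ is invariant under permutation of the letters of $\alpha_1$; $\psi(\alpha_1)\le\psi(\alpha_1\alpha_2)$; $\psi(\alpha_1\alpha_2)\le\psi(\alpha_1)+\psi(\alpha_2)$. It is a bounded complexity measure if in addition $\psi(\alpha)\ge|\alpha|$ for every word $\alpha$. The depth is $h(\alpha)=|\alpha|$. $\psi$ is extended to finite sets by $\psi(\emptyset)=0$, $\psi(\{f_{i_1},\dots,f_{i_m}\})=\psi(f_{i_1}\cdots f_{i_m})$, and to words $(f_{i_1},\delta_1)\cdots(f_{i_m},\delta_m)$ by $\psi(f_{i_1}\cdots f_{i_m})$ ($\psi(\lambda)=0$). For a $k$-decision tree $\Gamma$, $\psi(\Gamma)=\max_\tau\psi(\pi(\tau))$ over complete paths $\tau$. For $T\ne\Lambda$, $\psi^d(T)$ (resp. $\psi^a(T)$) is the minimum of $\psi(\Gamma)$ over deterministic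 (resp. nondeterministic) decision trees $\Gamma$ for $T$; $\psi^d(\Lambda)=\psi^a(\Lambda)=0$. Further definitions: for $T\ne\Lambda$ and $n\in\omega$, $\Omega_k^n(T)=\{\alpha\in\Omega_k(T):\psi(\alpha)\le n\}$. A finite set $U\subseteq\Omega_k^n(T)$ is a $(\psi,n)$-cover of $T$ if $\bigcup_{\alpha\in U}\Delta(T\alpha)=\Delta(T)$; it is irreducible if no proper subset of $U$ is a $(\psi,n)$-cover of $T$. $l_\psi(T,n)$ is the maximum cardinality of an irreducible $(\psi,n)$-cover of $T$, and $l_\psi(\Lambda,n)=0$. For a class $A$: $L_{\psi,A}(n)$ is undefined if the set $\{l_\psi(T,n):T\in A\}$ is infinite, and otherwise equals its maximum. $\mathcal H^\infty_{\psi,A}(n)$ is undefined if the set $\{\psi^d(T):T\in A,\ \psi^a(T)\le n\}$ is infinite, and otherwise equals its maximum. *)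

From mathcomp Require Import all_boot.
Set Implicit Arguments. Unset Strict Implicit. Unset Printing Implicit Defensive.

(* Attributes f_i are represented by their index i : nat.
   A word over P is a seq nat; a word over the alphabet {(f_i, delta)} is a
   seq (nat * nat). *)

Definition complexity_measure (psi : seq nat -> nat) : Prop :=
  [/\ (forall a, psi a = 0 <-> a = [::]),
      (forall a b, perm_eq a b -> psi a = psi b),
      (forall a b, psi a <= psi (a ++ b)) &
      (forall a b, psi (a ++ b) <= psi a + psi b)].

Definition bounded_measure (psi : seq nat -> nat) : Prop :=
  complexity_measure psi /\ (forall a, size a <= psi a).

Definition psiw (psi : seq nat -> nat) (w : seq (nat * nat)) : nat :=
  psi (map fst w).

(* A nonempty finite subset of omega, in canonical form: a strictly
   increasing nonempty list. *)
Definition decset (s : seq nat) : bool := sorted ltn s && (s != [::]).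

(* A table: list of column attributes, and list of rows (in order); each
   row is a tuple of values together with its decision set. *)
Record table := Table { attrs : seq nat; rows : seq (seq nat * seq nat) }.

Definition empty_table : table := Table [::] [::].

(* membership in M_k^infty *)
Definition wf_table (k : nat) (T : table) : bool :=
  [&& uniq (attrs T),
      uniq (map fst (rows T)),
      all (fun r => (size r.1 == size (attrs T)) && all (fun v => v < k) r.1
                    && decset r.2) (rows T) &
      (attrs T == [::]) == (rows T == [::])].

Definition colval (T : table) (r : seq nat) (a : nat) : nat :=
  nth 0 r (index a (attrs T)).

Definition row_sat (T : table) (r : seq nat) (w : seq (nat * nat)) : bool :=
  all (fun p => (p.1 \in attrs T) && (colval T r p.1 == p.2)) w.

Definition sub_rows (T : table) (w : seq (nat * nat)) :=
  [seq r <- rows T | row_sat T r.1 w].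

(* "T alpha = Lambda, or d belongs to Pi(T alpha)": d lies in the decision
   set of every row of T alpha. *)
Definition lambda_or_common (T : table) (w : seq (nat * nat)) (d : nat) : bool :=
  all (fun r => d \in r.2) (sub_rows T w).

Fixpoint dedup_first (seen : seq (seq nat)) (rs : seq (seq nat * seq nat)) :=
  match rs with
  | [::] => [::]
  | r :: rs' => if r.1 \in seen then dedup_first seen rs'
                else r :: dedup_first (r.1 :: seen) rs'
  end.

Definition opI (D : seq nat) (T : table) : table :=
  let keep := [seq i <- iota 0 (size (attrs T)) | nth 0 (attrs T) i \notin D] in
  if keep == [::] then empty_table else
  Table [seq nth 0 (attrs T) i | i <- keep]
        (dedup_first [::] [seq ([seq nth 0 r.1 i | i <- keep], r.2) | r <- rows T]).

Definition opJ (nu : seq nat -> seq nat) (T : table) : table :=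
  Table (attrs T) [seq (r.1, nu r.1) | r <- rows T].

Definition in_bracket (T T' : table) : Prop :=
  exists (D : seq nat) (nu : seq nat -> seq nat),
    {subset D <= attrs T} /\ (forall x, decset (nu x)) /\ T' = opJ nu (opI D T).

Definition closed_class (k : nat) (A : table -> Prop) : Prop :=
  (forall T, A T -> wf_table k T) /\
  (forall T', A T' <-> exists T, A T /\ in_bracket T T').

Definition nontrivial (A : table -> Prop) : Prop :=
  exists T, A T /\ rows T <> [::].

(* A non-root node: terminal (labelled with a decision) or labelled with an
   attribute, with labelled outgoing edges (edge label, child). *)
Inductive dnode := DLeaf of nat | DNode of nat & seq (nat * dnode).

(* A k-decision tree: the unlabelled root with its (unlabelled) edges to its
   children. *)
Definition dtree := seq dnode.

Fixpoint node_ok (det : bool) (k : nat) (v : dnode) : bool :=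
  match v with
  | DLeaf _ => true
  | DNode _ ch =>
      [&& size ch > 0, all (fun e => e.1 < k) ch, det ==> uniq (map fst ch) &
          (fix aux (l : seq (nat * dnode)) : bool :=
             match l with
             | [::] => true
             | (_, c) :: l' => node_ok det k c && aux l'
             end) ch]
  end.

Fixpoint node_attrs (v : dnode) : seq nat :=
  match v with
  | DLeaf _ => [::]
  | DNode a ch =>
      a :: (fix aux (l : seq (nat * dnode)) : seq nat :=
              match l with
              | [::] => [::]
              | (_, c) :: l' => node_attrs c ++ aux l'
              end) ch
  end.

Fixpoint node_paths (v : dnode) : seq (seq (nat * nat) * nat) :=
  match v with
  | DLeaf d => [:: ([::], d)]
  | DNode a ch =>
      (fix aux (l : seq (nat * dnode)) : seq (seq (nat * nat) * nat) :=
         match l with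
         | [::] => [::]
         | (dl, c) :: l' =>
             [seq ((a, dl) :: p.1, p.2) | p <- node_paths c] ++ aux l'
         end) ch
  end.

Definition tree_ok (det : bool) (k : nat) (G : dtree) : bool :=
  [&& size G > 0, det ==> (size G == 1) & all (node_ok det k) G].

Definition tree_attrs (G : dtree) : seq nat := flatten (map node_attrs G).
Definition tree_paths (G : dtree) := flatten (map node_paths G).

Definition tree_psi (psi : seq nat -> nat) (G : dtree) : nat :=
  \max_(p <- tree_paths G) psiw psi p.1.

(* det = false : nondeterministic decision tree for T;
   det = true  : deterministic decision tree for T. *)
Definition is_tree (det : bool) (k : nat) (T : table) (G : dtree) : Prop :=
  [/\ tree_ok det k G,
      {subset tree_attrs G <= attrs T},
      (forall r, r \in rows T -> has (fun p => row_sat T r.1 p.1) (tree_paths G)) &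
      (forall p, p \in tree_paths G -> lambda_or_common T p.1 p.2)].

(* is_psi det psi k T m : m = psi^d(T) (det = true) or psi^a(T) (det = false) *)
Definition is_psi (det : bool) (psi : seq nat -> nat) (k : nat) (T : table)
    (m : nat) : Prop :=
  (rows T = [::] /\ m = 0) \/
  [/\ rows T <> [::],
      (exists G, is_tree det k T G /\ tree_psi psi G = m) &
      (forall G, is_tree det k T G -> m <= tree_psi psi G)].

Definition in_Omega_n (psi : seq nat -> nat) (k : nat) (T : table) (n : nat)
    (w : seq (nat * nat)) : bool :=
  all (fun p => (p.1 \in attrs T) && (p.2 < k)) w && (psiw psi w <= n).

Definition is_cover (psi : seq nat -> nat) (k : nat) (T : table) (n : nat)
    (U : seq (seq (nat * nat))) : Prop :=
  (forall w, w \in U -> in_Omega_n psi k T n w) /\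
  (forall r, r \in rows T -> has (row_sat T r.1) U).

Definition is_irr_cover psi k T n (U : seq (seq (nat * nat))) : Prop :=
  is_cover psi k T n U /\
  (forall V, {subset V <= U} -> ~ {subset U <= V} -> ~ is_cover psi k T n V).

(* is_l psi k T n m : m = l_psi(T, n) (cardinality of a finite set of words =
   size of a duplicate-free list) *)
Definition is_l (psi : seq nat -> nat) (k : nat) (T : table) (n m : nat) : Prop :=
  (rows T = [::] /\ m = 0) \/
  [/\ rows T <> [::],
      (exists U, uniq U /\ is_irr_cover psi k T n U /\ size U = m) &
      (forall U, uniq U -> is_irr_cover psi k T n U -> size U <= m)].

Definition finite_natset (S : nat -> Prop) : Prop :=
  exists s : seq nat, forall x, S x <-> x \in s.

Definition L_defined psi k (A : table -> Prop) (n : nat) : Prop :=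
  finite_natset (fun m => exists T, A T /\ is_l psi k T n m).

Definition H_defined psi k (A : table -> Prop) (n : nat) : Prop :=
  finite_natset (fun m => exists T, A T /\
     (exists a, is_psi false psi k T a /\ a <= n) /\ is_psi true psi k T m).

From mathcomp Require Import all_boot zify.
From Stdlib Require Import Classical ClassicalEpsilon.
Set Implicit Arguments. Unset Strict Implicit. Unset Printing Implicit Defensive.

(* If L is bounded by B at n, a nondeterministic tree of complexity at most n
   for T yields a (psi, n)-cover of T by its path words; an irreducible
   subcover has at most B words, and the deterministic tree that queries all
   their attributes one after the other has complexity at most B * n.
   Conversely, let U_0, ..., U_(m-1) be an irreducible (psi, n)-cover of T and
   relabel every row of T with the set of indices of the words it satisfies.
   The new table T' lies in A and has a nondeterministic tree of complexity at
   most n, hence a deterministic tree of complexity at most B, which has at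
   most k^B complete paths since psi bounds the depth.  Each U_i owns a row
   satisfied by no other word, whose only decision is i, so that tree has at
   least m complete paths: m <= k^B. *)

Lemma classical_ex_min (P : nat -> Prop) x :
  P x -> exists m, P m /\ forall y, P y -> m <= y.
Proof.
elim/ltn_ind: x => x IH Px.
have [[y [Py lt_yx]]|no_smaller] := classic (exists y, P y /\ y < x).
  exact: IH Py.
exists x; split=> // y Py; rewrite leqNgt; apply/negP => lt_yx.
by apply: no_smaller; exists y.
Qed.

Lemma classical_ex_max (P : nat -> Prop) x N :
  P x -> (forall y, P y -> y <= N) -> exists m, P m /\ forall y, P y -> y <= m.
Proof.
move=> Px leN.
have [_ [[m Pm ->] min_m]] := @classical_ex_min (fun d => exists2 y, P y & d = N - y)
  _ (ex_intro2 _ _ x Px erefl).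
exists m; split=> // y Py; have := min_m _ (ex_intro2 _ _ y Py erefl).
by have := leN y Py; have := leN m Pm; lia.
Qed.

Lemma finite_natsetP (S : nat -> Prop) :
  finite_natset S <-> exists N, forall x, S x -> x <= N.
Proof.
split=> [[s Ss]|[N leN]].
  by exists (\max_(x <- s) x) => x /Ss xs; apply: leq_bigmax_seq.
exists [seq x <- iota 0 N.+1 | if excluded_middle_informative (S x) then true else false].
move=> x; rewrite mem_filter mem_iota add0n ltnS.
case: excluded_middle_informative => [Sx|nSx]; first by rewrite leN.
by split=> // /nSx.
Qed.

(** * Complexity measures *)

Lemma measure_uniq_sub psi s t : complexity_measure psi ->
  uniq s -> {subset s <= t} -> psi s <= psi t.
Proof.
case=> _ psi_perm psi_cat _ s_uniq st.
pose s' := [seq x <- undup t | x \in s].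
have /perm_to_subseq[r tr] : subseq s' t.
  exact: subseq_trans (filter_subseq _ _) (undup_subseq t).
rewrite (psi_perm s s'); last first.
  apply: uniq_perm => //; first by rewrite filter_uniq ?undup_uniq.
  by move=> x; rewrite mem_filter mem_undup andb_idr //; apply: st.
by rewrite (psi_perm t _ tr) psi_cat.
Qed.

Lemma measure_flatten psi ss : complexity_measure psi ->
  psi (flatten ss) <= \sum_(s <- ss) psi s.
Proof.
case=> psi0 _ _ psi_cat; elim: ss => [|s ss IH] /=.
  by rewrite big_nil; have [_ ->] := psi0 [::].
by rewrite big_cons (leq_trans (psi_cat _ _)) ?leq_add2l.
Qed.

Lemma measure_words_attrs psi (V : seq (seq (nat * nat))) n :
  complexity_measure psi -> (forall w, w \in V -> psiw psi w <= n) ->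
  psi (undup (flatten [seq map fst w | w <- V])) <= size V * n.
Proof.
move=> psi_m le_n; set F := flatten _.
have le_F : psi (undup F) <= psi F.
  by apply: measure_uniq_sub (undup_uniq F) _ => // x; rewrite mem_undup.
apply: leq_trans le_F (leq_trans (measure_flatten _ psi_m) _).
rewrite big_map big_seq (leq_trans (leq_sum _ le_n)) // -big_seq.
by rewrite big_const_seq count_predT iter_addn_0 mulnC.
Qed.

(** * Decision trees *)

Lemma mem_map_In (A : Type) (T : eqType) (f : A -> T) (l : seq A) x :
  x \in map f l -> exists2 e, List.In e l & x = f e.
Proof.
elim: l => //= e l IH; rewrite inE => /orP[/eqP->|/IH[e' e'l ->]].
  by exists e; [left|].
by exists e'; [right|].
Qed.

Lemma mem_flatten_map_In (A : Type) (T : eqType) (F : A -> seq T) (l : seq A) x :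
  x \in flatten (map F l) <-> exists2 e, List.In e l & x \in F e.
Proof.
elim: l => [|e l IH] /=; first by split=> // [[]].
rewrite mem_cat; split=> [/orP[xe|/IH[e' e'l xe']]|[e' [<-|e'l] xe']].
- by exists e; [left|].
- by exists e'; [right|].
- by rewrite xe'.
- by apply/orP; right; apply/IH; exists e'.
Qed.

Lemma all_In (A : Type) (a : pred A) (l : seq A) e : all a l -> List.In e l -> a e.
Proof. by elim: l => //= e' l IH /andP[ae' al] [<-|/IH]; [|apply]. Qed.

Lemma size_flatten_map_le (A T : Type) (F : A -> seq T) (l : seq A) n :
  (forall e, List.In e l -> size (F e) <= n) -> size (flatten (map F l)) <= size l * n.
Proof.
elim: l => //= e l IH le_n; rewrite size_cat mulSn leq_add //.
  by apply: le_n; left.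
by apply: IH => e' e'l; apply: le_n; right.
Qed.

Fixpoint dnode_nested_ind (P : dnode -> Prop) (PL : forall d, P (DLeaf d))
    (PN : forall a ch, (forall e, List.In e ch -> P e.2) -> P (DNode a ch))
    (v : dnode) : P v :=
  match v with
  | DLeaf d => PL d
  | DNode a ch =>
      PN a ch ((fix children (l : seq (nat * dnode)) :
                  forall e, List.In e l -> P e.2 :=
        match l return forall e, List.In e l -> P e.2 with
        | [::] => fun e H => match H with end
        | (dl, c) :: l' => fun e H =>
            match H with
            | or_introl E => eq_ind (dl, c) (fun e => P e.2) (dnode_nested_ind PL PN c) e E
            | or_intror H' => children l' e H'
            end
        end) ch)
  end.

Lemma node_pathsE a ch : node_paths (DNode a ch) =
  flatten [seq [seq ((a, e.1) :: p.1, p.2) | p <- node_paths e.2] | e <- ch].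
Proof. by elim: ch => //= [[dl c] l] /= ->. Qed.

Lemma node_okE det k a ch : node_ok det k (DNode a ch) =
  [&& 0 < size ch, all (fun e => e.1 < k) ch, det ==> uniq (map fst ch) &
      all (fun e => node_ok det k e.2) ch].
Proof. by rewrite /=; congr [&& _, _, _ & _]; elim: ch => //= [[dl c] l] /= ->. Qed.

Lemma node_attrsE a ch : node_attrs (DNode a ch) =
  a :: flatten [seq node_attrs e.2 | e <- ch].
Proof. by rewrite /=; congr cons; elim: ch => //= [[dl c] l] /= ->. Qed.

Lemma node_path_labels_lt det k v p : node_ok det k v ->
  p \in node_paths v -> all (fun q => q.2 < k) p.1.
Proof.
elim/dnode_nested_ind: v p => [d p _|a ch IH p]; first by rewrite inE => /eqP->.
rewrite node_okE node_pathsE => /and4P[_ ch_lt _ ch_ok].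
case/mem_flatten_map_In => e ech /mapP[p' p'e ->].
by rewrite /= (all_In ch_lt ech) (IH e ech p' (all_In ch_ok ech) p'e).
Qed.

Lemma node_path_attrs v p : p \in node_paths v -> {subset map fst p.1 <= node_attrs v}.
Proof.
elim/dnode_nested_ind: v p => [d p|a ch IH p]; first by rewrite inE => /eqP->.
rewrite node_pathsE node_attrsE => /mem_flatten_map_In[e ech /mapP[p' p'e ->]] x.
rewrite /= !inE => /orP[->//|/(IH e ech p' p'e) xe].
by apply/orP; right; apply/mem_flatten_map_In; exists e.
Qed.

Lemma tree_path_attrs G p : p \in tree_paths G -> {subset map fst p.1 <= tree_attrs G}.
Proof.
case/mem_flatten_map_In => v vG pv x /(node_path_attrs pv) xv.
by apply/mem_flatten_map_In; exists v.
Qed.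

Lemma is_tree_path_letters det k T G p : is_tree det k T G -> p \in tree_paths G ->
  all (fun q => (q.1 \in attrs T) && (q.2 < k)) p.1.
Proof.
case=> /and3P[_ _ G_ok] G_attrs _ _ pG; have /mem_flatten_map_In[v vG pv] := pG.
apply/allP => q qp; rewrite (allP (node_path_labels_lt (all_In G_ok vG) pv)) // andbT.
by apply/G_attrs/(tree_path_attrs pG)/map_f.
Qed.

Lemma size_node_paths_det k v h : 0 < k -> node_ok true k v ->
  (forall p, p \in node_paths v -> size p.1 <= h) -> size (node_paths v) <= k ^ h.
Proof.
move=> k_gt0; elim/dnode_nested_ind: v h => [d h _ _|a ch IH h].
  by rewrite expn_gt0 k_gt0.
rewrite node_okE node_pathsE => /and4P[_ ch_lt ch_uniq ch_ok].
set paths := flatten _ => short; case: h short => [|h] short.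
  case E: paths => [//|p ps]; have pin : p \in paths by rewrite E mem_head.
  by move: (short p pin); case/mem_flatten_map_In: pin => e _ /mapP[p' _ ->].
have size_ch : size ch <= k.
  rewrite -(size_map fst) -[k](size_iota 0); apply: uniq_leq_size ch_uniq _ => x.
  by case/mem_map_In => e ech ->; rewrite mem_iota (all_In ch_lt ech).
rewrite expnS (leq_trans (size_flatten_map_le (n := k ^ h) _)) ?leq_mul2r ?size_ch ?orbT //.
move=> e ech; rewrite size_map; apply: IH (all_In ch_ok ech) _ => // p pe.
have p_paths : ((a, e.1) :: p.1, p.2) \in paths.
  by apply/mem_flatten_map_In; exists e => //; apply: map_f.
exact: short _ p_paths.
Qed.

Lemma size_tree_paths_det psi k G : bounded_measure psi -> 0 < k -> tree_ok true k G ->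
  size (tree_paths G) <= k ^ tree_psi psi G.
Proof.
move=> [_ size_le] k_gt0 /and3P[_ /eqP G1 G_ok].
case: G G1 G_ok => [|v []] //= _; rewrite /tree_psi /tree_paths /= cats0 andbT => v_ok.
apply: size_node_paths_det => // p pv; rewrite -(size_map fst).
by apply: leq_trans (size_le _) (leq_bigmax_seq (F := fun p => psiw psi p.1) _ pv _).
Qed.

(* [W] is a list of rules (word, decision) and [b] accumulates the answers
   received so far; a leaf applies the first rule whose word is among them. *)
Definition leaf_decision (W : seq (seq (nat * nat) * nat)) (b : seq (nat * nat)) : nat :=
  nth 0 (map snd W) (find (fun p => all (mem b) p.1) W).

Fixpoint query_tree (k : nat) W (S : seq nat) (b : seq (nat * nat)) : dnode :=
  match S with
  | [::] => DLeaf (leaf_decision W b)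
  | a :: S' => DNode a [seq (v, query_tree k W S' (rcons b (a, v))) | v <- iota 0 k]
  end.

Lemma query_tree_ok k W S b : 0 < k -> node_ok true k (query_tree k W S b).
Proof.
move=> k_gt0; elim: S b => [|a S IH] b //; rewrite node_okE.
rewrite size_map size_iota k_gt0 -map_comp map_id iota_uniq !all_map /=.
by apply/andP; split; apply/allP => v //=; rewrite mem_iota.
Qed.

Lemma query_tree_attrs k W S b : {subset node_attrs (query_tree k W S b) <= S}.
Proof.
elim: S b => [|a S IH] b x //; rewrite node_attrsE !inE.
case/orP=> [->//|]; rewrite -map_comp => /flattenP[s /mapP[v _ ->] /IH->].
by rewrite orbT.
Qed.

Lemma query_tree_pathsP k W S b p : p \in node_paths (query_tree k W S b) ->
  map fst p.1 = S /\ p.2 = leaf_decision W (b ++ p.1).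
Proof.
elim: S b p => [|a S IH] b p; first by rewrite inE => /eqP-> /=; rewrite cats0.
rewrite node_pathsE -map_comp.
case/flattenP => s /mapP[v _ ->] /mapP[p' /IH[fst_p' ->] ->].
by rewrite /= fst_p' cat_rcons.
Qed.

Lemma query_tree_path_mem k W S b w : map fst w = S -> all (fun q => q.2 < k) w ->
  (w, leaf_decision W (b ++ w)) \in node_paths (query_tree k W S b).
Proof.
elim: S b w => [|a S IH] b [|[a' v] w] // => [_ _|[->] fst_w /andP[lt_vk lt_w]].
  by rewrite cats0 mem_head.
rewrite node_pathsE -map_comp.
apply/flattenP; eexists; first by apply/mapP; exists v; rewrite ?mem_iota.
by apply/mapP; exists (w, leaf_decision W (rcons b (a, v) ++ w)); rewrite ?IH ?cat_rcons.
Qed.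

Lemma row_sat_sub_word T x b w : row_sat T x b -> row_sat T x w ->
  {subset map fst w <= map fst b} -> {subset w <= b}.
Proof.
move=> xb xw wb q qw; have /mapP[y yb qy] := wb _ (map_f fst qw).
have /andP[_ /eqP qv] := allP xw q qw; have /andP[_ /eqP yv] := allP xb y yb.
by rewrite [q]surjective_pairing qy -qv qy yv -surjective_pairing.
Qed.

Lemma lambda_or_common_sub T w b d : {subset w <= b} ->
  lambda_or_common T w d -> lambda_or_common T b d.
Proof.
move=> wb /allP w_common; apply/allP => r; rewrite mem_filter => /andP[rb rT].
by apply: w_common; rewrite mem_filter rT andbT; apply/allP => q /wb /(allP rb).
Qed.

Lemma lambda_or_common_leaf_decision T W b :
  (forall p, p \in W -> lambda_or_common T p.1 p.2) ->
  (forall r, r \in rows T -> has (fun p => row_sat T r.1 p.1) W) ->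
  (forall p, p \in W -> {subset map fst p.1 <= map fst b}) ->
  lambda_or_common T b (leaf_decision W b).
Proof.
move=> W_common W_cover W_sub; apply/allP => r rb.
move: (rb); rewrite mem_filter => /andP[r_b rT].
have /hasP[q qW r_q] := W_cover r rT.
have has_rule : has (fun p => all (mem b) p.1) W.
  by apply/hasP; exists q => //; apply/allP; apply: row_sat_sub_word r_b r_q (W_sub q qW).
have i_lt : find (fun p => all (mem b) p.1) W < size W by rewrite -has_find.
rewrite /leaf_decision (nth_map ([::], 0)) //.
apply: (allP (lambda_or_common_sub _ (W_common _ (mem_nth _ i_lt)))) rb.
by apply/allP: (nth_find ([::], 0) has_rule).
Qed.

Lemma is_tree_query_tree k T W S : 0 < k -> wf_table k T -> {subset S <= attrs T} ->
  (forall p, p \in W -> lambda_or_common T p.1 p.2) ->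
  (forall r, r \in rows T -> has (fun p => row_sat T r.1 p.1) W) ->
  (forall p, p \in W -> {subset map fst p.1 <= S}) ->
  is_tree true k T [:: query_tree k W S [::]].
Proof.
move=> k_gt0 /and4P[_ _ /allP T_rows _] ST W_common W_cover W_sub.
rewrite /is_tree /tree_ok /tree_attrs /tree_paths /= !cats0 query_tree_ok //.
split=> // [x /query_tree_attrs /ST //|r rT|p /query_tree_pathsP[fst_p ->]].
  have /andP[/andP[/eqP size_r r_lt] _] := T_rows r rT.
  apply/hasP; exists ([seq (a, colval T r.1 a) | a <- S],
                      leaf_decision W ([::] ++ [seq (a, colval T r.1 a) | a <- S])).
    apply: query_tree_path_mem; first by rewrite -map_comp map_id.
    rewrite all_map; apply/allP => a /ST aT.
    by apply/(allP r_lt)/mem_nth; rewrite size_r index_mem.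
  by rewrite /row_sat /= all_map; apply/allP => a /ST aT; rewrite /= aT eqxx.
by rewrite cat0s; apply: lambda_or_common_leaf_decision => // q /W_sub qS x /qS; rewrite fst_p.
Qed.

Lemma tree_psi_query_tree psi k W S : tree_psi psi [:: query_tree k W S [::]] <= psi S.
Proof.
rewrite /tree_psi /tree_paths /= cats0.
by apply/bigmax_leqP_seq => p /query_tree_pathsP[fst_p _] _; rewrite /psiw fst_p.
Qed.

Lemma det_tree_of_tree k T G : 0 < k -> wf_table k T ->
  is_tree false k T G -> exists D, is_tree true k T D.
Proof.
move=> k_gt0 wfT [_ G_attrs G_cover G_common].
exists [:: query_tree k (tree_paths G) (undup (tree_attrs G)) [::]].
apply: is_tree_query_tree => // [x|p pG x /(tree_path_attrs pG)]; rewrite mem_undup //.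
exact: G_attrs.
Qed.

Lemma is_psi_exists det psi k T G : is_tree det k T G -> exists m, is_psi det psi k T m.
Proof.
move=> TG; have [rT|rT] := eqVneq (rows T) [::]; first by exists 0; left.
have [_ [[G' [TG' <-]] min_m]] :=
  @classical_ex_min (fun m => exists G, is_tree det k T G /\ tree_psi psi G = m) _
    (ex_intro _ G (conj TG erefl)).
exists (tree_psi psi G'); right; split; [exact/eqP | by exists G' |].
by move=> G'' TG''; apply: min_m; exists G''.
Qed.

Lemma is_psi_le_tree det psi k T m G : is_psi det psi k T m -> is_tree det k T G ->
  m <= tree_psi psi G.
Proof. by case=> [[_ ->]//|[_ _ min_m]]; apply: min_m. Qed.

Lemma is_psi_witness det psi k T m : is_psi det psi k T m -> rows T <> [::] ->
  exists2 G, is_tree det k T G & tree_psi psi G = m.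
Proof. by case=> [[rT _] /(_ rT)//|[_ [G [TG <-]] _]] _; exists G. Qed.

(** * Covers *)

Fixpoint words_upto (X : seq (nat * nat)) n : seq (seq (nat * nat)) :=
  if n is n'.+1 then [::] :: flatten [seq [seq x :: w | w <- words_upto X n'] | x <- X]
  else [:: [::]].

Lemma mem_words_upto X n w : size w <= n -> all (mem X) w -> w \in words_upto X n.
Proof.
elim: n w => [|n IH] [|x w] //= size_w /andP[xX wX]; rewrite in_cons /=.
apply/flattenP; exists [seq x :: w' | w' <- words_upto X n].
  exact: (map_f (fun y => [seq y :: w' | w' <- words_upto X n]) xX).
by rewrite map_f ?IH.
Qed.

Lemma Omega_n_bounded psi k T n : bounded_measure psi -> exists N, forall U,
  uniq U -> (forall w, w \in U -> in_Omega_n psi k T n w) -> size U <= N.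
Proof.
case=> _ size_le; exists (size (words_upto [seq (a, v) | a <- attrs T, v <- iota 0 k] n)).
move=> U U_uniq U_Omega; apply: uniq_leq_size => // w /U_Omega /andP[w_letters psi_w].
apply: mem_words_upto; first by rewrite -(size_map fst) (leq_trans (size_le _)).
apply/allP => -[a v] /(allP w_letters) /andP[/= aT vk].
by apply: allpairs_f; rewrite ?mem_iota.
Qed.

Lemma is_cover_eq_mem psi k T n U U' :
  U =i U' -> is_cover psi k T n U -> is_cover psi k T n U'.
Proof.
move=> UU' [U_Omega U_cover]; split=> [w|r /U_cover].
  by rewrite -UU'; apply: U_Omega.
by rewrite (eq_has_r UU').
Qed.

Lemma irreducible_subcover psi k T n U0 : is_cover psi k T n U0 ->
  exists V, [/\ uniq V, is_irr_cover psi k T n V & {subset V <= U0}].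
Proof.
move=> U0_cover.
pose P m := exists V, [/\ uniq V, is_cover psi k T n V, {subset V <= U0} & size V = m].
have P_undup : P (size (undup U0)).
  exists (undup U0); split; rewrite ?undup_uniq //.
    by apply: is_cover_eq_mem U0_cover => x; rewrite mem_undup.
  by move=> x; rewrite mem_undup.
have [_ [[V [V_uniq V_cover VU0 <-]] V_min]] := classical_ex_min P_undup.
exists V; split=> //; split=> // V' V'V not_VV' V'_cover; apply: not_VV'.
have undupV'V : {subset undup V' <= V} by move=> x; rewrite mem_undup => /V'V.
have V'_small : size V <= size (undup V').
  apply: V_min; exists (undup V'); split; rewrite ?undup_uniq //.
  - by apply: is_cover_eq_mem V'_cover => x; rewrite mem_undup.
  - by move=> x /undupV'V /VU0.
have [_ eqV] := uniq_min_size (undup_uniq V') undupV'V V'_small.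
by move=> x; rewrite -eqV mem_undup.
Qed.

Lemma irr_cover_private_row psi k T n U w : is_irr_cover psi k T n U -> w \in U ->
  exists r, [/\ r \in rows T, row_sat T r.1 w &
                forall w', w' \in U -> row_sat T r.1 w' -> w' = w].
Proof.
move=> [[U_Omega U_cover] U_irr] wU.
have [r [rT not_covered]] :
    exists r, r \in rows T /\ ~~ has (row_sat T r.1) [seq w' <- U | w' != w].
  apply: NNPP => all_covered; apply: (U_irr [seq w' <- U | w' != w]).
  - by move=> w'; rewrite mem_filter => /andP[].
  - by move=> U_sub; have := U_sub w wU; rewrite mem_filter eqxx.
  split=> [w'|r rT]; first by rewrite mem_filter => /andP[_ /U_Omega].
  by apply/negPn/negP => nc; apply: all_covered; exists r.
have private w' : w' \in U -> row_sat T r.1 w' -> w' = w.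
  move=> w'U r_w'; apply/eqP/negPn/negP => w'w; move/negP: not_covered; apply.
  by apply/hasP; exists w'; rewrite // mem_filter w'w.
exists r; split=> //; have /hasP[w0 w0U r_w0] := U_cover r rT.
by rewrite -(private w0 w0U r_w0).
Qed.

Lemma is_l_exists psi k T n U : bounded_measure psi -> rows T <> [::] ->
  uniq U -> is_irr_cover psi k T n U -> exists m, is_l psi k T n m.
Proof.
move=> psi_b rT U_uniq U_irr; have [N le_N] := Omega_n_bounded k T n psi_b.
pose P m := exists U, [/\ uniq U, is_irr_cover psi k T n U & size U = m].
have P_U : P (size U) by exists U.
have P_le_N m : P m -> m <= N by move=> [V [V_uniq [[V_Omega _] _] <-]]; apply: le_N.
have [_ [[V [V_uniq V_irr <-]] V_max]] := classical_ex_max P_U P_le_N.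
exists (size V); right; split=> //; first by exists V.
by move=> U' U'_uniq U'_irr; apply: V_max; exists U'.
Qed.

Lemma is_l_ge psi k T n m U : is_l psi k T n m -> rows T <> [::] ->
  uniq U -> is_irr_cover psi k T n U -> size U <= m.
Proof. by case=> [[rT _] /(_ rT)//|[_ _ max_m]] _; apply: max_m. Qed.

Lemma tree_paths_cover psi k T G n : is_tree false k T G -> tree_psi psi G <= n ->
  is_cover psi k T n (map fst (tree_paths G)).
Proof.
move=> TG le_n; split=> [w /mapP[p pG ->]|r rT].
  rewrite /in_Omega_n (is_tree_path_letters TG pG) (leq_trans _ le_n) //.
  exact: (leq_bigmax_seq (F := fun p => psiw psi p.1) _ pG).
by case: TG => _ _ /(_ r rT); rewrite has_map.
Qed.

(** * Relabelling the rows of a table by a cover *)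

Lemma dedup_first_id seen rs : uniq (map fst rs) ->
  all (fun r => r.1 \notin seen) rs -> dedup_first seen rs = rs.
Proof.
elim: rs seen => //= r rs IH seen /andP[r_new rs_uniq] /andP[r_unseen rs_unseen].
rewrite (negbTE r_unseen) IH //; apply/allP => r' r'rs /=.
rewrite inE negb_or (allP rs_unseen r' r'rs) andbT; apply: contraNneq r_new => <-.
exact: map_f.
Qed.

Lemma opI_nil k T : wf_table k T -> rows T <> [::] -> opI [::] T = T.
Proof.
case/and4P=> _ rows_uniq /allP T_rows attrs_rows rT.
have attrs_nil : attrs T != [::] by rewrite (eqP attrs_rows); apply/eqP.
rewrite /opI (eq_in_filter (a2 := predT)) // filter_predT.
have -> : (iota 0 (size (attrs T)) == [::]) = false by case: (attrs T) attrs_nil.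
rewrite -/(mkseq _ _) mkseq_nth.
have -> : [seq ([seq nth 0 r.1 i | i <- iota 0 (size (attrs T))], r.2) | r <- rows T]
          = rows T.
  apply: map_id_in => r rT'; have /andP[/andP[/eqP <- _] _] := T_rows r rT'.
  by rewrite -/(mkseq _ _) mkseq_nth -surjective_pairing.
by rewrite dedup_first_id ?all_predT //; case: (T).
Qed.

Lemma closed_class_opJ k A T nu : closed_class k A -> A T -> rows T <> [::] ->
  (forall x, decset (nu x)) -> A (opJ nu T).
Proof.
move=> [wfA closedA] AT rT nu_dec; apply/closedA; exists T; split=> //.
by exists [::], nu; rewrite (opI_nil (wfA T AT) rT).
Qed.

(* [0] is only a placeholder keeping the decision set nonempty: it is used for
   rows satisfying no word of [U], which do not occur when [U] covers [T]. *)
Definition cover_indices (T : table) (U : seq (seq (nat * nat))) (x : seq nat) : seq nat :=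
  if [seq i <- iota 0 (size U) | row_sat T x (nth [::] U i)] is [::] then [:: 0]
  else [seq i <- iota 0 (size U) | row_sat T x (nth [::] U i)].

Lemma decset_cover_indices T U x : decset (cover_indices T U x).
Proof.
rewrite /cover_indices /decset; set s := filter _ _.
have : sorted ltn s by apply: sorted_filter; [apply: ltn_trans | apply: iota_ltn_sorted].
by clearbody s; case: s => // i s' ->.
Qed.

Lemma mem_cover_indices T U x i j : i < size U -> row_sat T x (nth [::] U i) ->
  (j \in cover_indices T U x) = (j < size U) && row_sat T x (nth [::] U j).
Proof.
move=> lt_i x_i.
have mem_s j' : (j' \in [seq i <- iota 0 (size U) | row_sat T x (nth [::] U i)]) =
                (j' < size U) && row_sat T x (nth [::] U j').
  by rewrite mem_filter mem_iota andbC.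
move: (mem_s i) (mem_s j); rewrite lt_i x_i /cover_indices.
by case: (filter _ _).
Qed.

Fixpoint chain (w : seq (nat * nat)) (d : nat) : dnode :=
  if w is (a, v) :: w' then DNode a [:: (v, chain w' d)] else DLeaf d.

Lemma chain_paths w d : node_paths (chain w d) = [:: (w, d)].
Proof. by elim: w => [|[a v] w IH] //; rewrite node_pathsE /= IH. Qed.

Lemma chain_attrs w d : node_attrs (chain w d) = map fst w.
Proof. by elim: w => [|[a v] w IH] //; rewrite node_attrsE /= IH cats0. Qed.

Lemma chain_ok k w d : all (fun q => q.2 < k) w -> node_ok false k (chain w d).
Proof. by elim: w => [|[a v] w IH] // /andP[lt_v lt_w]; rewrite node_okE /= lt_v IH. Qed.

Definition cover_forest (U : seq (seq (nat * nat))) : dtree :=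
  [seq chain (nth [::] U i) i | i <- iota 0 (size U)].

Lemma tree_paths_cover_forest U :
  tree_paths (cover_forest U) = [seq (nth [::] U i, i) | i <- iota 0 (size U)].
Proof.
rewrite /tree_paths /cover_forest -map_comp.
by elim: (iota 0 (size U)) => //= i s ->; rewrite chain_paths.
Qed.

Lemma tree_psi_cover_forest psi k T n U : is_cover psi k T n U ->
  tree_psi psi (cover_forest U) <= n.
Proof.
move=> [U_Omega _]; rewrite /tree_psi tree_paths_cover_forest.
apply/bigmax_leqP_seq => p /mapP[i]; rewrite mem_iota => /= lt_i -> _.
by case/andP: (U_Omega _ (mem_nth [::] lt_i)).
Qed.

Lemma is_tree_cover_forest psi k T n U : rows T <> [::] -> is_cover psi k T n U ->
  is_tree false k (opJ (cover_indices T U) T) (cover_forest U).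
Proof.
move=> rT [U_Omega U_cover].
have Ui_Omega i : i < size U -> in_Omega_n psi k T n (nth [::] U i).
  by move=> /(mem_nth [::]) /U_Omega.
have U_gt0 : 0 < size U.
  by case: (rows T) rT U_cover => // r rs _ /(_ r (mem_head _ _)); case: (U).
split.
- rewrite /tree_ok size_map size_iota U_gt0 all_map; apply/allP => i.
  rewrite mem_iota => /= /Ui_Omega /andP[U_letters _]; apply: chain_ok.
  by apply/allP => q /(allP U_letters) /andP[].
- move=> x; rewrite /tree_attrs /cover_forest -map_comp => /flattenP[s /mapP[i]].
  rewrite mem_iota => /= /Ui_Omega /andP[U_letters _] ->; rewrite chain_attrs.
  by case/mapP => q /(allP U_letters) /andP[qT _] ->.
- move=> r' /mapP[r rT' ->]; rewrite tree_paths_cover_forest has_map.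
  have /hasP[w wU r_w] := U_cover r rT'.
  by apply/hasP; exists (index w U); rewrite ?mem_iota ?index_mem //= nth_index.
move=> p; rewrite tree_paths_cover_forest => /mapP[i]; rewrite mem_iota => /= lt_i ->.
apply/allP => r'; rewrite mem_filter => /andP[r_i /mapP[r _ r'E]].
rewrite r'E /= in r_i *.
by rewrite (mem_cover_indices _ lt_i r_i) lt_i r_i.
Qed.

Lemma size_irr_cover_le_paths det psi k T n U D : uniq U -> is_irr_cover psi k T n U ->
  is_tree det k (opJ (cover_indices T U) T) D -> size U <= size (tree_paths D).
Proof.
move=> U_uniq U_irr [_ _ D_cover D_common].
rewrite -(size_map snd) -[size U](size_iota 0); apply: uniq_leq_size (iota_uniq 0 _) _.
move=> i; rewrite mem_iota => /= lt_i.
have [r [rT r_i r_private]] := irr_cover_private_row U_irr (mem_nth [::] lt_i).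
have rT' : (r.1, cover_indices T U r.1) \in rows (opJ (cover_indices T U) T).
  exact: (map_f (fun r => (r.1, cover_indices T U r.1)) rT).
have /hasP[p pD r_p] := D_cover _ rT'.
have r'_p : (r.1, cover_indices T U r.1) \in sub_rows (opJ (cover_indices T U) T) p.1.
  by rewrite mem_filter r_p rT'.
have := allP (D_common p pD) _ r'_p.
rewrite /= (mem_cover_indices _ lt_i r_i) => /andP[lt_p2 r_p2].
have : nth [::] U p.2 == nth [::] U i by rewrite (r_private _ (mem_nth [::] lt_p2) r_p2).
by rewrite nth_uniq // => /eqP <-; apply: map_f.
Qed.

Lemma H_defined_of_L_defined psi k A n : bounded_measure psi -> 0 < k ->
  closed_class k A -> L_defined psi k A n -> H_defined psi k A n.
Proof.
move=> psi_b k_gt0 [wfA _] /finite_natsetP[B le_B]; apply/finite_natsetP.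
exists (B * n) => m [T [AT [[a [Ta le_an]] Tm]]].
case: (Tm) => [[_ ->]//|[rT _ _]].
have [G TG Ga] := is_psi_witness Ta rT.
have [_ _ _ G_common] := TG.
have /irreducible_subcover[V [V_uniq V_irr VG]] :=
  tree_paths_cover TG (leq_trans (eq_leq Ga) le_an).
have [[V_Omega V_cover] _] := V_irr.
have [l Tl] := is_l_exists psi_b rT V_uniq V_irr.
have le_VB : size V <= B.
  by apply: leq_trans (is_l_ge Tl rT V_uniq V_irr) (le_B l _); exists T.
pose S := undup (flatten [seq map fst w | w <- V]).
have psi_S : psi S <= size V * n.
  by apply: measure_words_attrs psi_b.1 _ => w /V_Omega /andP[].
pose W := [seq p <- tree_paths G | p.1 \in V].
have TD : is_tree true k T [:: query_tree k W S [::]].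
  apply: is_tree_query_tree (wfA T AT) _ _ _ _ => // [x|p|r /V_cover /hasP[w wV r_w]|p].
  - rewrite mem_undup => /flattenP[_ /mapP[w /V_Omega /andP[w_letters _] ->]].
    by case/mapP => q /(allP w_letters) /andP[qT _] ->.
  - by rewrite mem_filter => /andP[_]; apply: G_common.
  - have /mapP[p pG wp] := VG w wV; apply/hasP; exists p; rewrite -?wp //.
    by rewrite mem_filter -wp wV.
  - rewrite mem_filter => /andP[pV _] x xp; rewrite mem_undup.
    by apply/flattenP; exists (map fst p.1); rewrite ?map_f.
apply: leq_trans (is_psi_le_tree Tm TD) (leq_trans (tree_psi_query_tree _ _ _ _) _).
by rewrite (leq_trans psi_S) // leq_mul2r le_VB orbT.
Qed.

Lemma L_defined_of_H_defined psi k A n : bounded_measure psi -> 0 < k ->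
  closed_class k A -> H_defined psi k A n -> L_defined psi k A n.
Proof.
move=> psi_b k_gt0 clA /finite_natsetP[B le_B]; apply/finite_natsetP.
exists (k ^ B) => m [T [AT [[_ ->]//|[rT [U [U_uniq [U_irr <-]]] _]]]].
have [U_cover _] := U_irr.
pose T' := opJ (cover_indices T U) T.
have AT' : A T' := closed_class_opJ clA AT rT (decset_cover_indices T U).
have rT' : rows T' <> [::] by rewrite /T' /=; case: (rows T) rT.
have T'G := is_tree_cover_forest rT U_cover.
have [a T'a] := is_psi_exists psi T'G.
have [D0 T'D0] := det_tree_of_tree k_gt0 (clA.1 T' AT') T'G.
have [d T'd] := is_psi_exists psi T'D0.
have le_dB : d <= B.
  apply: le_B; exists T'; split=> //; split=> //; exists a; split=> //.
  exact: leq_trans (is_psi_le_tree T'a T'G) (tree_psi_cover_forest U_cover).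
have [D T'D D_d] := is_psi_witness T'd rT'; rewrite -D_d in le_dB.
have [D_ok _ _ _] := T'D.
apply: leq_trans (size_irr_cover_le_paths U_uniq U_irr T'D) _.
exact: leq_trans (size_tree_paths_det psi_b k_gt0 D_ok) (leq_pexp2l k_gt0 le_dB).
Qed.

Theorem theorem1 (psi : seq nat -> nat) (k : nat) (A : table -> Prop) :
  bounded_measure psi -> 2 <= k -> closed_class k A -> nontrivial A ->
  (forall n, H_defined psi k A n) <-> (forall n, L_defined psi k A n).
Proof.
move=> psi_b k_ge2 clA _; have k_gt0 : 0 < k by apply: leq_trans k_ge2.
split=> defined n.
  exact: L_defined_of_H_defined psi_b k_gt0 clA (defined n).
exact: H_defined_of_L_defined psi_b k_gt0 clA (defined n).
Qed.
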